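(* Let $n,m,\mu$ be positive integers and let $\Xi=\{\hat\xi\in\mathbb{R}^{n+m}: P\hat\xi\ge p\}$ be a bounded polytope (with given $P\in\mathbb{R}^{l\times(n+m)}$, $p\in\mathbb{R}^l$) such that for every $\hat\xi=(\hat a_1,\dots,\hat a_n,\hat b_1,\dots,\hat b_m)^T\in\Xi$ one has $\hat b_1\neq0$ and all roots of $\hat b(\lambda)=\hat b_1+\hat b_2\lambda+\dots+\hat b_m\lambda^{m-1}$ lie outside the closed unit disk. Let $y=(y_t)$ and $u=(u_t)$ be real sequences with $y_k=0$ for $k\le -n$ and $u_k=0$ for $k<0$ (the initial values $y_{1-n},\dots,y_0$ being arbitrary). Let $\hat\theta=(\hat\xi^T,\hat\delta^w,\hat\delta^y,\hat\delta^u)^T$ with $\hat\xi\in\Xi$, $\hat\delta^w\ge0$, $\hat\delta^y\ge0$, $\hat\delta^u\ge0$, and suppose that for all $t\ge0$ $$\big|\hat a(q^{-1})y_{t+1}-\hat b(q^{-1})u_t\big|\le \hat\delta^w+\hat\delta^y\,|y_{t+1-\mu}^{t}|+\hat\delta^u\,|u_{t+1-\mu}^{t}|.$$ Then the data $(y,u)$ are consistent with the plant model with parameter vector $\hat\theta$: namely, $\hat\xi\in\Xi$ and there exist a real sequence $w$ with $|w_t|\le1$ for all $t$ and strictly causal (linear time-varying) operators $\Delta^1,\Delta^2$ on real sequences with memory $\mu$, satisfying $|\Delta^1(y)_t|\le|y_{t-\mu}^{t-1}|$ and $|\Delta^2(u)_t|\le|u_{t-\mu}^{t-1}|$ for all $t$,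 such that for all $t\ge0$ $$\hat a(q^{-1})y_{t+1}=\hat b(q^{-1})u_t+\hat\delta^w w_{t+1}+\hat\delta^y\Delta^1(y)_{t+1}+\hat\delta^u\Delta^2(u)_{t+1}.$$
   Context: $q^{-1}$ is the backward shift operator, $q^{-1}y_t=y_{t-1}$. For $\hat\xi=(\hat a_1,\dots,\hat a_n,\hat b_1,\dots,\hat b_m)^T$, $\hat a(q^{-1})=1+\hat a_1q^{-1}+\dots+\hat a_nq^{-n}$ and $\hat b(q^{-1})=\hat b_1+\hat b_2q^{-1}+\dots+\hat b_mq^{1-m}$. For a sequence $x$, $x_s^t=(x_s,\dots,x_t)$ and $|x_s^t|=\max_{s\le k\le t}|x_k|$. An operator $\Delta$ on real sequences is strictly causal with memory $\mu$ if $(\Delta x)_t$ depends only on $x_{t-\mu},\dots,x_{t-1}$. *)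

From Stdlib Require Import Reals ZArith Lia.
From Coquelicot Require Import Coquelicot.
Open Scope R_scope.

Fixpoint rsum (f : nat -> R) (k : nat) : R :=
  match k with O => 0 | S k' => rsum f k' + f k' end.

Fixpoint csum (f : nat -> C) (k : nat) : C :=
  match k with O => RtoC 0 | S k' => Cplus (csum f k') (f k') end.

Fixpoint maxabs (x : Z -> R) (s : Z) (len : nat) : R :=
  match len with
  | O => 0
  | S k => Rmax (Rabs (x (s + Z.of_nat k)%Z)) (maxabs x s k)
  end.

(* |x_s^t| = max_{s <= k <= t} |x_k| *)
Definition winmax (x : Z -> R) (s t : Z) : R :=
  maxabs x s (Z.to_nat (t - s + 1)).

(* A parameter vector xi : nat -> R of length n+m, 0-based:
   hat a_i = xi (i-1) for i = 1..n,  hat b_j = xi (n + j - 1) for j = 1..m. *)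
Definition coef_a (n : nat) (xi : nat -> R) (i : nat) : R := xi (i - 1)%nat.
Definition coef_b (n : nat) (xi : nat -> R) (j : nat) : R := xi (n + j - 1)%nat.

Definition inXi (n m l : nat) (P : nat -> nat -> R) (p : nat -> R)
    (xi : nat -> R) : Prop :=
  forall r, (r < l)%nat -> rsum (fun c => P r c * xi c) (n + m) >= p r.

Definition Xi_bounded (n m l : nat) (P : nat -> nat -> R) (p : nat -> R) : Prop :=
  exists M : R, forall xi, inXi n m l P p xi ->
    forall c, (c < n + m)%nat -> Rabs (xi c) <= M.

Definition bpoly (n m : nat) (xi : nat -> R) (lam : C) : C :=
  csum (fun k => Cmult (RtoC (coef_b n xi (S k))) (Cpow lam k)) m.

(* hat a(q^{-1}) y_{t+1} = y_{t+1} + sum_{i=1}^n a_i y_{t+1-i} *)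
Definition apply_a (n : nat) (xi : nat -> R) (y : Z -> R) (t : Z) : R :=
  y (t + 1)%Z + rsum (fun k => coef_a n xi (S k) * y (t + 1 - Z.of_nat (S k))%Z) n.

(* hat b(q^{-1}) u_t = sum_{j=1}^m b_j u_{t+1-j} *)
Definition apply_b (n m : nat) (xi : nat -> R) (u : Z -> R) (t : Z) : R :=
  rsum (fun k => coef_b n xi (S k) * u (t - Z.of_nat k)%Z) m.

Definition linear_op (D : (Z -> R) -> (Z -> R)) : Prop :=
  (forall x x' t, D (fun k => x k + x' k) t = D x t + D x' t) /\
  (forall c x t, D (fun k => c * x k) t = c * D x t).

Definition strictly_causal_mem (mu : nat) (D : (Z -> R) -> (Z -> R)) : Prop :=
  forall x x' t,
    (forall k : nat, (1 <= k <= mu)%nat -> x (t - Z.of_nat k)%Z = x' (t - Z.of_nat k)%Z) ->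
    D x t = D x' t.

(** The residual [e t := â(q^-1) y_(t+1) - b̂(q^-1) u_t] is bounded by
    [B t := δw + δy |y_(t+1-μ)^t| + δu |u_(t+1-μ)^t|], so [w_(t+1) := e t / B t] has modulus
    at most 1 and [w_(t+1) B t = e t].  For a signal [x], the operator that multiplies by
    [w_t] the (sign-corrected) entry of its argument at a fixed index where [|x|] attains
    its maximum over the window [t-μ .. t-1] is linear, strictly causal with memory [μ],
    and maps [x] to [w_t |x_(t-μ)^(t-1)|].  Taking it for [x = y] and [x = u] as [Δ¹] and
    [Δ²], the three uncertainty terms add up to [w_(t+1) B t = e t]. *)
From Stdlib Require Import Reals ZArith Lia Lra IndefiniteDescription.
From Coquelicot Require Import Coquelicot.
Open Scope R_scope.

Lemma sign_mul_self (r : R) : sign r * r = Rabs r.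
Proof.
  destruct (Rlt_le_dec 0 r) as [r_pos | r_le0].
  - rewrite sign_eq_1, Rabs_right by lra; ring.
  - destruct (Req_dec r 0) as [-> | r_neq0].
    + rewrite Rabs_R0; ring.
    + rewrite sign_eq_m1, Rabs_left by lra; ring.
Qed.

(** Clamping to [[-1, 1]] makes the normalised residual bounded also where the
    hypothesis gives no information, and it is the identity where it does. *)
Definition clamp1 (r : R) : R := Rmax (-1) (Rmin 1 r).

Lemma Rabs_clamp1_le1 (r : R) : Rabs (clamp1 r) <= 1.
Proof.
  unfold clamp1; apply Rabs_le.
  split; [apply Rmax_l | apply Rmax_lub; [lra | apply Rmin_l]].
Qed.

Lemma clamp1_div_mul (e b : R) : Rabs e <= b -> clamp1 (e / b) * b = e.
Proof.
  intro e_le_b.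
  destruct (Req_dec b 0) as [-> | b_neq0].
  - pose proof (Rabs_pos e); assert (Rabs e = 0) as e_abs0 by lra.
    rewrite (Rabs_eq_0 e e_abs0); ring.
  - assert (0 < b) by (pose proof (Rabs_pos e); lra).
    assert (Rabs (e / b) <= 1) as ratio_le1.
    { unfold Rdiv; rewrite Rabs_mult, Rabs_inv, (Rabs_right b) by lra.
      apply (Rmult_le_reg_r b); [lra|].
      rewrite Rmult_assoc, Rinv_l by exact b_neq0; lra. }
    apply Rabs_le_between in ratio_le1.
    unfold clamp1; rewrite Rmin_right, Rmax_right by lra.
    field; exact b_neq0.
Qed.

Lemma maxabs_attained (x : Z -> R) (s : Z) (len : nat) : (0 < len)%nat ->
  exists k, (s <= k < s + Z.of_nat len)%Z /\ Rabs (x k) = maxabs x s len.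
Proof.
  induction len as [|j IH]; intro len_pos; [lia|].
  destruct j as [|j].
  - exists s; split; [lia|].
    cbn [maxabs]; rewrite Z.add_0_r, Rmax_left by apply Rabs_pos; reflexivity.
  - cbn [maxabs].
    apply Rmax_case.
    + exists (s + Z.of_nat (S j))%Z; split; [lia | reflexivity].
    + destruct (IH ltac:(lia)) as (k & k_range & k_max).
      exists k; split; [lia | exact k_max].
Qed.

Lemma winmax_attained (mu : nat) (x : Z -> R) (t : Z) : (0 < mu)%nat ->
  exists k, (t - Z.of_nat mu <= k <= t - 1)%Z /\
            Rabs (x k) = winmax x (t - Z.of_nat mu) (t - 1).
Proof.
  intro mu_pos; unfold winmax.
  replace (Z.to_nat (t - 1 - (t - Z.of_nat mu) + 1)) with mu by lia.
  destruct (maxabs_attained x (t - Z.of_nat mu) mu mu_pos) as (k & k_range & k_max).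
  exists k; split; [lia | exact k_max].
Qed.

Lemma window_gain_op (mu : nat) (x : Z -> R) (c : Z -> R) :
  (0 < mu)%nat -> (forall t, Rabs (c t) <= 1) ->
  exists D : (Z -> R) -> (Z -> R),
    linear_op D /\ strictly_causal_mem mu D /\
    (forall t, D x t = c t * winmax x (t - Z.of_nat mu) (t - 1)) /\
    (forall t, Rabs (D x t) <= winmax x (t - Z.of_nat mu) (t - 1)).
Proof.
  intros mu_pos c_le1.
  destruct (functional_choice _ (fun t => winmax_attained mu x t mu_pos)) as [k k_spec].
  assert (D_x : forall t, c t * sign (x (k t)) * x (k t)
                          = c t * winmax x (t - Z.of_nat mu) (t - 1)).
  { intro t; rewrite Rmult_assoc, sign_mul_self; f_equal; apply k_spec. }
  exists (fun z t => c t * sign (x (k t)) * z (k t)).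
  split; [split; intros; cbv beta; ring|].
  split; [|split; [exact D_x|]].
  - intros z z' t z_eq; cbv beta.
    destruct (k_spec t) as [k_range _].
    replace (k t) with (t - Z.of_nat (Z.to_nat (t - k t)))%Z by lia.
    rewrite z_eq by lia; reflexivity.
  - intro t; rewrite D_x, Rabs_mult.
    destruct (k_spec t) as [_ <-].
    rewrite Rabs_Rabsolu.
    pose proof (c_le1 t); pose proof (Rabs_pos (x (k t))); nra.
Qed.

Theorem proposition1
  (n m mu l : nat) (P : nat -> nat -> R) (p : nat -> R)
  (Hn : (0 < n)%nat) (Hm : (0 < m)%nat) (Hmu : (0 < mu)%nat)
  (Hbdd : Xi_bounded n m l P p)
  (Hroots : forall xi, inXi n m l P p xi ->
      coef_b n xi 1 <> 0 /\
      (forall lam : C, Cmod lam <= 1 -> bpoly n m xi lam <> RtoC 0))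
  (y u : Z -> R)
  (Hy0 : forall k : Z, (k <= - Z.of_nat n)%Z -> y k = 0)
  (Hu0 : forall k : Z, (k < 0)%Z -> u k = 0)
  (xi : nat -> R) (dw dy du : R)
  (Hxi : inXi n m l P p xi)
  (Hdw : 0 <= dw) (Hdy : 0 <= dy) (Hdu : 0 <= du)
  (Hineq : forall t : Z, (0 <= t)%Z ->
      Rabs (apply_a n xi y t - apply_b n m xi u t)
        <= dw + dy * winmax y (t + 1 - Z.of_nat mu) t
              + du * winmax u (t + 1 - Z.of_nat mu) t) :
  inXi n m l P p xi /\
  exists (w : Z -> R) (D1 D2 : (Z -> R) -> (Z -> R)),
    (forall t, Rabs (w t) <= 1) /\
    linear_op D1 /\ strictly_causal_mem mu D1 /\
    linear_op D2 /\ strictly_causal_mem mu D2 /\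
    (forall t, Rabs (D1 y t) <= winmax y (t - Z.of_nat mu) (t - 1)) /\
    (forall t, Rabs (D2 u t) <= winmax u (t - Z.of_nat mu) (t - 1)) /\
    (forall t : Z, (0 <= t)%Z ->
      apply_a n xi y t =
        apply_b n m xi u t + dw * w (t + 1)%Z + dy * D1 y (t + 1)%Z
        + du * D2 u (t + 1)%Z).
Proof.
  split; [exact Hxi|].
  set (e t := apply_a n xi y t - apply_b n m xi u t).
  set (B t := dw + dy * winmax y (t + 1 - Z.of_nat mu) t
                 + du * winmax u (t + 1 - Z.of_nat mu) t).
  set (w s := clamp1 (e (s - 1)%Z / B (s - 1)%Z)).
  assert (w_le1 : forall s, Rabs (w s) <= 1) by (intro; apply Rabs_clamp1_le1).
  destruct (window_gain_op mu y w Hmu w_le1) as (D1 & D1_lin & D1_causal & D1_y & D1_bound).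
  destruct (window_gain_op mu u w Hmu w_le1) as (D2 & D2_lin & D2_causal & D2_u & D2_bound).
  exists w, D1, D2; do 7 (split; [assumption|]).
  intros t t_ge0.
  assert (w_mul_B : w (t + 1)%Z * B t = e t).
  { unfold w; replace (t + 1 - 1)%Z with t by lia.
    apply clamp1_div_mul; exact (Hineq t t_ge0). }
  rewrite D1_y, D2_u; replace (t + 1 - 1)%Z with t by lia.
  unfold B, e in w_mul_B; lra.
Qed.
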